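(* Let $m>n$ be positive integers and let $G[V_1,V_2]$ be a balanced bipartite graph on $2(m+n-1)$ vertices (so $|V_1|=|V_2|=m+n-1$) with minimum degree $\delta(G)>\frac{3}{4}(m+n-1)$. Then for every red-blue coloring of the edges of $G$, either the red subgraph contains a connected $m$-matching or the blue subgraph contains a connected $n$-matching.
   Context: For a red-blue edge coloring of $G$, the red subgraph $G_R$ (resp. blue subgraph $G_B$) is the spanning subgraph of $G$ consisting of all red (resp. blue) edges. A connected $k$-matching in a graph $H$ is a matching with $k$ edges all of which lie in a single connected component of $H$. A red connected $k$-matching is a connected $k$-matching in $G_R$; similarly for blue. *)

From mathcomp Require Import all_boot.
Set Implicit Arguments. Unset Strict Implicit. Unset Printing Implicit Defensive.

Definition simple_graph (T : finType) (e : rel T) : Prop :=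
  symmetric e /\ irreflexive e.

Definition deg (T : finType) (e : rel T) (x : T) : nat := #|[set y | e x y]|.

Definition bipartite_parts (T : finType) (e : rel T) (V1 V2 : {set T}) : Prop :=
  [disjoint V1 & V2] /\ V1 :|: V2 = setT /\
  (forall x y, e x y -> (x \in V1) && (y \in V2) || (x \in V2) && (y \in V1)).

Definition is_matching (T : finType) (H : rel T) (M : {set T * T}) : Prop :=
  (forall p, p \in M -> H p.1 p.2) /\
  (forall p q, p \in M -> q \in M -> p != q ->
     [disjoint [set p.1; p.2] & [set q.1; q.2]]).

Definition connected_matching (T : finType) (H : rel T) (k : nat) : Prop :=
  exists M : {set T * T}, is_matching H M /\ #|M| = k /\
    exists r : T, forall p, p \in M -> connect H r p.1.

Definition red_sub (T : finType) (e : rel T) (c : T -> T -> bool) : rel T :=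
  fun x y => e x y && c x y.
Definition blue_sub (T : finType) (e : rel T) (c : T -> T -> bool) : rel T :=
  fun x y => e x y && ~~ c x y.

From mathcomp Require Import all_boot zify.
From Stdlib Require Import Classical_Prop.

Set Implicit Arguments. Unset Strict Implicit. Unset Printing Implicit Defensive.

(* Suppose neither matching exists and put N = m + n - 1.  By Konig's theorem, applied inside
   each component, every red component has a vertex cover of fewer than m vertices and every
   blue one a cover of fewer than n.  As deg > 3N/4, two vertices of one side have more than
   N/2 common neighbours; so if all edges between X and a set Y of at least N/2 vertices on the
   other side have one colour, X lies in one component of that colour, and a vertex of X and
   one of Y missed by its cover have degree sum at most 2N - |X| - |Y| + k - 1, which bounds
   |X| + |Y|.
   Applied to the blue edges leaving a red component C, this shows that C either misses fewer
   than n vertices of each side or meets each side in fewer than n vertices.  In the first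
   case the vertices of C outside its red cover are blue-connected and too many to be covered
   by fewer than n vertices.  In the second case red degrees are below n and red-connected
   vertices of V1 are blue-connected, so there are at most two blue components, each lying
   essentially on one side, and the red edges between their large parts violate the bound. *)

Section Cardinality.
Variable T : finType.
Implicit Types A B C J K U : {set T}.

Lemma leq_card_subU A B C : A \subset B :|: C -> #|A| <= #|B| + #|C|.
Proof. by move/subset_leq_card/leq_trans; apply; rewrite (leq_card_setU B C). Qed.

Lemma cardsUI_sub A B U : A \subset U -> B \subset U -> #|A| + #|B| <= #|U| + #|A :&: B|.
Proof. by move=> sAU sBU; rewrite -cardsUI leq_add2r subset_leq_card // subUset sAU. Qed.

Lemma cardsI_disjoint J A B : [disjoint A & B] -> #|J :&: A| + #|J :&: B| <= #|J|.
Proof.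
move=> dAB; rewrite -cardsUI -setIIr (disjoint_setI0 dAB) setI0 cards0 addn0.
by rewrite subset_leq_card // subUset !subsetIl.
Qed.

Lemma leq_card_setDI A B K : A \subset B -> #|A| <= #|A :\: K| + #|K :&: B|.
Proof.
move=> sAB; have := cardsID K A; have := subset_leq_card (setIS K sAB).
by rewrite setIC; lia.
Qed.

Lemma card_lt_subsetN A B : #|B| < #|A| -> ~~ (A \subset B).
Proof. by move=> ltBA; apply/negP=> /subset_leq_card; lia. Qed.

End Cardinality.

Lemma exists_subset_card (T : finType) (A : {set T}) k :
  k <= #|A| -> exists2 B : {set T}, B \subset A & #|B| = k.
Proof.
case/card_geqP=> s [uniq_s size_s sA]; exists [set x in s].
  by apply/subsetP=> x; rewrite inE; apply: sA.
by rewrite cardsE -size_s; apply/card_uniqP.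
Qed.

Section Hall.
Variable T : finType.
Implicit Types (H : rel T) (S X : {set T}) (M : {set T * T}).

Definition nbhd H S : {set T} := [set y | [exists x in S, H x y]].

Lemma nbhdP H S y : reflect (exists2 x, x \in S & H x y) (y \in nbhd H S).
Proof. by rewrite inE; apply: (iffP exists_inP) => [] [x]; exists x. Qed.

Lemma nbhd0 H : nbhd H set0 = set0.
Proof. by apply/setP=> y; rewrite !inE; apply/negbTE/exists_inP=> -[x]; rewrite inE. Qed.

(* Sources and targets are each pairwise distinct: a matching as soon as no target lies in [X]. *)
Definition matching_from H X M :=
  [/\ {in M, forall p, p.1 \in X /\ H p.1 p.2},
      {in M &, injective (@fst T T)} & {in M &, injective (@snd T T)}].

Lemma matching_from_mem H X M p : matching_from H X M -> p \in M -> p.1 \in X /\ H p.1 p.2.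
Proof. by case=> MX _ _ /MX. Qed.

Lemma matching_fromW H H' X X' M M' : subrel H H' -> X \subset X' -> M' \subset M ->
  matching_from H X M -> matching_from H' X' M'.
Proof.
move=> sH sX /subsetP sM [MX inj1 inj2]; split; last 2 first.
- exact: sub_in2 inj1.
- exact: sub_in2 inj2.
by move=> p /sM /MX[pX pH]; split; [apply: (subsetP sX) | apply: sH].
Qed.

Lemma matching_from1 H x y : H x y -> matching_from H [set x] [set (x, y)].
Proof.
by move=> Hxy; split=> [p|p q|p q]; rewrite ?inE => /eqP-> //; rewrite ?inE => /eqP->.
Qed.

Lemma matching_fromU H X1 X2 M1 M2 : [disjoint X1 & X2] ->
  {in M1 & M2, forall p q, p.2 != q.2} ->
  matching_from H X1 M1 -> matching_from H X2 M2 ->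
  matching_from H (X1 :|: X2) (M1 :|: M2) /\ #|M1 :|: M2| = #|M1| + #|M2|.
Proof.
move=> dX dM [M1X inj11 inj12] [M2X inj21 inj22].
have dM1 p q : p \in M1 -> q \in M2 -> p.1 != q.1.
  move=> /M1X[pX _] /M2X[qX _]; apply: contraTneq qX => <-.
  by rewrite (disjointFr dX pX).
split; last by rewrite cardsU (_ : M1 :&: M2 = set0) ?cards0 ?subn0 //;
  apply/setP=> p; rewrite !inE; apply/negbTE/andP=> -[/dM1 /[apply]]; rewrite eqxx.
split=> [p|p q|p q]; rewrite !inE.
- by case/orP=> [/M1X|/M2X] [pX ->]; rewrite pX ?orbT.
- case/orP=> [pM|pM] /orP[qM|qM] eq1; first exact: inj11.
  + by move: (dM1 _ _ pM qM); rewrite eq1 eqxx.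
  + by move: (dM1 _ _ qM pM); rewrite eq1 eqxx.
  exact: inj21.
- case/orP=> [pM|pM] /orP[qM|qM] eq2; first exact: inj12.
  + by move: (dM _ _ pM qM); rewrite eq2 eqxx.
  + by move: (dM _ _ qM pM); rewrite eq2 eqxx.
  exact: inj22.
Qed.

Definition hall_condition H X d := forall S, S \subset X -> #|S| <= #|nbhd H S| + d.

Lemma hall_condition_tight H X d S : hall_condition H X d -> S \subset X ->
  #|nbhd H S| + d <= #|S| ->
  hall_condition [rel a b | H a b && (b \notin nbhd H S)] (X :\: S) 0.
Proof.
move=> hall sSX tight S' /subsetDP[sS'X dS'S].
have := hall (S :|: S'); rewrite subUset sSX sS'X cardsU.
rewrite disjoint_sym in dS'S; rewrite (disjoint_setI0 dS'S) cards0 subn0 => /(_ isT).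
have : #|nbhd H (S :|: S')| <= #|nbhd H S| +
                              #|nbhd [rel a b | H a b && (b \notin nbhd H S)] S'|.
  apply: leq_card_subU; apply/subsetP=> y /nbhdP[x]; rewrite inE.
  case: (boolP (y \in nbhd H S)) => yS; first by rewrite inE yS.
  case/orP=> xS Hxy; first by case/nbhdP: yS; exists x.
  by rewrite inE; apply/orP; right; apply/nbhdP; exists x; rewrite //= Hxy.
lia.
Qed.

Lemma hall_condition_delete H X d x y : hall_condition H X d -> x \in X ->
  (forall S, S \subset X -> S != set0 -> S != X -> #|S| < #|nbhd H S| + d) ->
  hall_condition [rel a b | H a b && (b != y)] (X :\ x) d.
Proof.
move=> hall xX loose S sS.
have [->|nS0] := eqVneq S set0; first by rewrite cards0.
have sSX : S \subset X by apply: subset_trans sS (subsetDl X [set x]).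
have nSX : S != X by apply: contraTneq sS => ->; rewrite subsetD1 xX andbF.
have := loose S sSX nS0 nSX.
have : #|nbhd H S| <= #|[set y]| + #|nbhd [rel a b | H a b && (b != y)] S|.
  apply: leq_card_subU; apply/subsetP=> z /nbhdP[w wS Hwz]; rewrite !inE.
  by case: eqP => //= /eqP nzy; apply/exists_inP; exists w; rewrite //= Hwz nzy.
rewrite cards1; lia.
Qed.

(* Induction on [#|X|]: split [X] along a tight proper subset [S] and match [X :\: S] outside
   [nbhd H S], or else take any edge [x y] and delete [x] and [y]. *)
Theorem hall_deficiency H X d : hall_condition H X d ->
  exists2 M, matching_from H X M & #|X| <= #|M| + d.
Proof.
have [s] := ubnP #|X|; elim: s => // s IH in H X d *; rewrite ltnS => leXs hall.
have [nbX0|/set0Pn[y /nbhdP[x xX Hxy]]] := eqVneq (nbhd H X) set0.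
  exists set0; first by split=> [p|p q|p q]; rewrite inE.
  by have := hall X (subxx X); rewrite nbX0 !cards0.
have restrictW (P : rel T) : subrel [rel a b | H a b && P a b] H by move=> a b /andP[].
case: (boolP [exists S : {set T},
               [&& S \subset X, S != set0, S != X & #|nbhd H S| + d <= #|S|]]).
  case/existsP=> S /and4P[sSX nS0 nSX tight].
  have ltSX : #|S| < #|X| by rewrite proper_card // properEneq nSX.
  have ltXS : #|X :\: S| < #|X|.
    by rewrite cardsD (setIidPr sSX); move: nS0; rewrite -card_gt0; lia.
  have [M1 M1S leS] := IH H S d (leq_trans ltSX leXs)
    (fun S' sS' => hall S' (subset_trans sS' sSX)).
  have [M2 M2XS leXS] := IH _ _ _ (leq_trans ltXS leXs) (hall_condition_tight hall sSX tight).
  have [||MU cardU] :=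
    matching_fromU _ _ M1S (matching_fromW (restrictW _) (subxx _) (subxx _) M2XS).
  - by have /subsetDP[_] := subxx (X :\: S); rewrite disjoint_sym.
  - move=> p q /(matching_from_mem M1S)[pS Hp] /(matching_from_mem M2XS)[_ /andP[_ qnS]].
    by apply: contraNneq qnS => <-; apply/nbhdP; exists p.1.
  exists (M1 :|: M2); first by apply: matching_fromW MU; rewrite // subUset sSX subsetDl.
  by have := cardsID S X; rewrite (setIidPr sSX); lia.
rewrite negb_exists => /forallP loose.
have {}loose S : S \subset X -> S != set0 -> S != X -> #|S| < #|nbhd H S| + d.
  by move=> sSX nS0 nSX; move: (loose S); rewrite sSX nS0 nSX /= -ltnNge.
have ltXx : #|X :\ x| < #|X| by rewrite (cardsD1 x X) xX.
have [M' M'X leX'] :=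
  IH _ (X :\ x) d (leq_trans ltXx leXs) (hall_condition_delete y hall xX loose).
have [||MU cardU] := matching_fromU _ _ (matching_from1 Hxy)
                       (matching_fromW (restrictW _) (subxx _) (subxx _) M'X).
- by rewrite disjoints1 !inE eqxx.
- by move=> p q; rewrite inE => /eqP-> /(matching_from_mem M'X)[_ /andP[_]]; rewrite eq_sym.
exists ([set (x, y)] :|: M').
  by apply: matching_fromW MU; rewrite // subUset sub1set xX subsetDl.
by rewrite cardU cards1; have := cardsD1 x X; rewrite xX; lia.
Qed.

End Hall.

Section ComponentCover.
Variable T : finType.
Implicit Type H : rel T.

Definition component H v : {set T} := [set x | connect H v x].

Definition coverable H k := forall r, exists2 J : {set T}, #|J| < k &
  forall x y, H x y -> connect H r x -> (x \in J) || (y \in J).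

Lemma bipartite_parts_sym H V1 V2 : bipartite_parts H V1 V2 -> bipartite_parts H V2 V1.
Proof.
case=> dV [cov edges]; split; first by rewrite disjoint_sym.
by rewrite setUC; split=> // x y /edges; rewrite orbC.
Qed.

Lemma bipartite_parts_subrel H H' V1 V2 :
  subrel H' H -> bipartite_parts H V1 V2 -> bipartite_parts H' V1 V2.
Proof. by move=> sH [dV [cov edges]]; split=> //; split=> // x y /sH /edges. Qed.

Lemma bipartite_parts_mem H V1 V2 x : bipartite_parts H V1 V2 -> (x \in V1) || (x \in V2).
Proof. by case=> _ [cov _]; rewrite -in_setU cov inE. Qed.

Lemma bipartite_parts_edge H V1 V2 x y :
  bipartite_parts H V1 V2 -> x \in V1 -> H x y -> y \in V2.
Proof. by case=> dV [_ edges] xV1 /edges; rewrite xV1 (disjointFr dV xV1) orbF. Qed.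

Lemma matching_from_bipartite H V1 V2 M :
  bipartite_parts H V1 V2 -> matching_from H V1 M -> is_matching H M.
Proof.
move=> bip MV1; have [_ inj1 inj2] := MV1.
split=> [p /(matching_from_mem MV1)[] // | p q pM qM npq].
have [p1 /(bipartite_parts_edge bip p1) p2] := matching_from_mem MV1 pM.
have [q1 /(bipartite_parts_edge bip q1) q2] := matching_from_mem MV1 qM.
have [dV _] := bip.
rewrite -setI_eq0; apply/eqP/setP=> z; rewrite !inE; apply/negbTE/negP.
case/andP=> /orP[]/eqP-> /orP[]/eqP eqz.
- by move: npq; rewrite (inj1 _ _ pM qM eqz) eqxx.
- by move: q2; rewrite -eqz (disjointFr dV p1).
- by move: p2; rewrite eqz (disjointFr dV q1).
- by move: npq; rewrite (inj2 _ _ pM qM eqz) eqxx.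
Qed.

(* Hall with deficiency [#|X| - k] on the V1-side [X] of a component either yields a
   k-matching or a set [S] whose cover [(X :\: S) :|: nbhd H S] has fewer than k vertices. *)
Lemma coverable_of_no_connected_matching H V1 V2 k : symmetric H ->
  bipartite_parts H V1 V2 -> ~ connected_matching H k -> coverable H k.
Proof.
move=> Hsym bip noM r; set X := component H r :&: V1.
have [hall|] :=
  boolP [forall S : {set T}, (S \subset X) ==> (#|S| + k <= #|X| + #|nbhd H S|)].
  exfalso; apply: noM.
  have {}hall (S : {set T}) : S \subset X -> #|S| + k <= #|X| + #|nbhd H S|.
    by move=> sSX; move/forallP/(_ S)/implyP/(_ sSX): hall.
  have [M MX leXM] : exists2 M, matching_from H X M & #|X| <= #|M| + (#|X| - k).
    by apply: hall_deficiency => S /hall; lia.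
  have leX : k <= #|X| by have := hall set0 (sub0set X); rewrite nbhd0 cards0 add0n addn0.
  have [M' sM' <-] : exists2 M' : {set T * T}, M' \subset M & #|M'| = k.
    by apply: exists_subset_card; lia.
  have M'X : matching_from H X M' by apply: matching_fromW MX.
  exists M'; split.
    by apply: matching_from_bipartite bip (matching_fromW _ _ _ M'X); rewrite ?subsetIr.
  split=> //; exists r => p /(matching_from_mem M'X)[].
  by rewrite !inE => /andP[].
rewrite negb_forall => /existsP[S]; rewrite negb_imply -ltnNge => /andP[sSX ltS].
exists ((X :\: S) :|: nbhd H S).
  apply: leq_ltn_trans (leq_card_setU _ _).1 _.
  by have := subset_leq_card sSX; rewrite cardsD (setIidPr sSX); lia.
move=> x y Hxy rx; have ry : connect H r y := connect_trans rx (connect1 Hxy).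
have inX z : connect H r z -> z \in V1 -> z \in X by move=> rz zV1; rewrite !inE rz.
have inC z w : z \in X -> H z w ->
    (z \in (X :\: S) :|: nbhd H S) || (w \in (X :\: S) :|: nbhd H S).
  move=> zX Hzw; rewrite !in_setU in_setD zX andbT.
  case: (boolP (z \in S)) => //= zS.
  by apply/orP; right; apply/orP; right; apply/nbhdP; exists z.
case/orP: (bipartite_parts_mem x bip) => [xV1|xV2]; first exact/inC/Hxy/inX.
rewrite orbC; apply: inC; last by rewrite Hsym.
exact: inX ry (bipartite_parts_edge (bipartite_parts_sym bip) xV2 Hxy).
Qed.

End ComponentCover.

Section DenseBipartite.
Variables (T : finType) (e : rel T) (N : nat).
Hypotheses (esym : symmetric e) (deg_gt : forall x, 3 * N < 4 * deg e x).
Implicit Types (A B X Y : {set T}) (H : rel T).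

Definition sides A B := [/\ bipartite_parts e A B, #|A| = N & #|B| = N].

Lemma sides_sym A B : sides A B -> sides B A.
Proof. by case=> bip cA cB; split=> //; apply: bipartite_parts_sym. Qed.

Lemma nb_subset_side A B x : sides A B -> x \in A -> [set y | e x y] \subset B.
Proof.
by case=> bip _ _ xA; apply/subsetP=> y; rewrite inE; apply: bipartite_parts_edge bip xA.
Qed.

Lemma deg_sum_gt x y : 3 * N < 2 * (deg e x + deg e y).
Proof. by have := deg_gt x; have := deg_gt y; lia. Qed.

Lemma common_neighbour A B x x' Y : sides A B -> x \in A -> x' \in A ->
  Y \subset B -> N <= 2 * #|Y| -> exists2 y, y \in Y & e x y && e x' y.
Proof.
move=> sAB xA x'A sYB leY; have [_ _ cB] := sAB.
have sx := nb_subset_side sAB xA; have sx' := nb_subset_side sAB x'A.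
have := cardsUI_sub sx sx'.
have := cardsUI_sub (subset_trans (subsetIl _ [set y | e x' y]) sx) sYB.
have := deg_gt x; have := deg_gt x'; rewrite /deg => dx dx' i1 i2.
have /card_gt0P[y] : 0 < #|[set y | e x y] :&: [set y | e x' y] :&: Y| by lia.
by rewrite !inE => /andP[/andP[ex ex'] yY]; exists y; rewrite ?ex.
Qed.

(* Any two vertices of [X] have a common neighbour in [Y], so [X] lies in one component of [H];
   an [x] in [X] and a [y] in [Y] outside its cover [J] can only see [J] inside [Y], resp. [X],
   hence [deg x + deg y <= 2 N - #|X| - #|Y| + #|J|]. *)
Lemma coverable_block_bound A B H k X Y : sides A B -> symmetric H -> coverable H k ->
  0 < k -> X \subset A -> Y \subset B -> {in X & Y, forall x y, e x y -> H x y} ->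
  k <= #|X| -> k <= #|Y| -> N <= 2 * #|Y| -> 2 * (#|X| + #|Y|) + 3 <= N + 2 * k.
Proof.
move=> sAB Hsym Hcov k_gt0 sXA sYB eH leX leY leY2.
have [x0 x0X] : exists x0, x0 \in X by apply/card_gt0P; lia.
have [J ltJ Jcov] := Hcov x0.
have Xconn x : x \in X -> connect H x0 x.
  move=> xX; have [y yY /andP[e0 e1]] :=
    common_neighbour sAB (subsetP sXA _ x0X) (subsetP sXA _ xX) sYB leY2.
  apply: connect_trans (connect1 (eH _ _ x0X yY e0)) _.
  by rewrite (sym_connect_sym Hsym) connect1 // eH.
have /subsetPn[x xX xJ] := card_lt_subsetN (leq_trans ltJ leX).
have /subsetPn[y yY yJ] := card_lt_subsetN (leq_trans ltJ leY).
have nx : [set z | e x z] \subset (B :\: Y) :|: (J :&: B).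
  have xA := subsetP sXA _ xX; apply/subsetP=> z zx.
  rewrite !inE (subsetP (nb_subset_side sAB xA) _ zx) !andbT.
  case: (boolP (z \in Y)) => //= zY; rewrite inE in zx.
  by have := Jcov _ _ (eH _ _ xX zY zx) (Xconn _ xX); rewrite (negbTE xJ).
have ny : [set z | e y z] \subset (A :\: X) :|: (J :&: A).
  apply/subsetP=> z zy.
  rewrite !inE (subsetP (nb_subset_side (sides_sym sAB) (subsetP sYB _ yY)) _ zy) !andbT.
  case: (boolP (z \in X)) => //= zX; rewrite inE esym in zy.
  by have := Jcov _ _ (eH _ _ zX yY zy) (Xconn _ zX); rewrite (negbTE yJ) orbF.
have [[dAB _] cA cB] := sAB.
have := subset_leq_card sXA; have := subset_leq_card sYB.
have := leq_card_subU nx; have := leq_card_subU ny.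
rewrite !cardsD (setIidPr sXA) (setIidPr sYB) cA cB.
have := cardsI_disjoint J dAB; have := deg_sum_gt x y; rewrite /deg.
move: ltJ; clear; lia.
Qed.

End DenseBipartite.

Section TwoColouredMatchings.
Variables (m n : nat) (T : finType) (e : rel T) (V1 V2 : {set T}) (c : T -> T -> bool).
Hypotheses (n_gt0 : 0 < n) (ltnm : n < m) (esym : symmetric e)
  (bip : bipartite_parts e V1 V2) (cardV1 : #|V1| = m + n - 1) (cardV2 : #|V2| = m + n - 1)
  (deg_gt : forall x, 3 * (m + n - 1) < 4 * deg e x) (csym : forall x y, c x y = c y x).

Local Notation N := (m + n - 1).
Local Notation red := (red_sub e c).
Local Notation blue := (blue_sub e c).
Local Notation sides := (sides e N).

Lemma red_sub_sym : symmetric red.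
Proof. by move=> x y; rewrite /red_sub esym csym. Qed.

Lemma blue_sub_sym : symmetric blue.
Proof. by move=> x y; rewrite /blue_sub esym csym. Qed.

Lemma red_subW : subrel red e. Proof. by move=> x y /andP[]. Qed.

Lemma blue_subW : subrel blue e. Proof. by move=> x y /andP[]. Qed.

Lemma red_or_blue x y : e x y -> red x y || blue x y.
Proof. by rewrite /red_sub /blue_sub => ->; case: c. Qed.

Lemma sides12 : sides V1 V2. Proof. by []. Qed.

Lemma sides21 : sides V2 V1. Proof. exact: sides_sym sides12. Qed.

Lemma blue_across_red_comp v x y :
  x \in component red v -> y \notin component red v -> e x y -> blue x y.
Proof.
rewrite !inE => vx vy /red_or_blue/orP[rxy|//].
by rewrite (connect_trans vx (connect1 rxy)) in vy.
Qed.

Section Covers.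
Hypotheses (red_cov : coverable red m) (blue_cov : coverable blue n).

Lemma blue_cut_bound A B (P Q : {set T}) : sides A B ->
  {in P & Q, forall x y, e x y -> blue x y} -> N <= 2 * #|B :&: Q| -> #|A :&: P| < n.
Proof.
move=> sAB PQ leQ; rewrite ltnNge; apply/negP=> leP.
have edges : {in A :&: P & B :&: Q, forall x y, e x y -> blue x y}.
  by move=> x y /setIP[_ xP] /setIP[_ yQ]; apply: PQ.
have := coverable_block_bound esym deg_gt sAB blue_sub_sym blue_cov n_gt0
          (subsetIl A P) (subsetIl B Q) edges leP.
lia.
Qed.

Lemma red_comp_dichotomy v :
  (#|V1 :\: component red v| < n /\ #|V2 :\: component red v| < n) \/
  (#|V1 :&: component red v| < n /\ #|V2 :&: component red v| < n).
Proof.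
set C := component red v.
have out : {in C & ~: C, forall x y, e x y -> blue x y}.
  by move=> x y xC; rewrite inE; apply: blue_across_red_comp.
have into : {in ~: C & C, forall x y, e x y -> blue x y}.
  by move=> x y xC yC; rewrite esym blue_sub_sym; apply: out.
have := cardsID C V1; have := cardsID C V2; rewrite !setDE.
case: (leqP N (2 * #|V2 :&: C|)) => [big2|small2] card2 card1.
  have out1 := blue_cut_bound sides12 into big2.
  have big1 : N <= 2 * #|V1 :&: C| by lia.
  by left; split; last exact: blue_cut_bound sides21 into big1.
have in1 : #|V1 :&: C| < n by apply: blue_cut_bound sides12 out _; lia.
by right; split=> //; apply: blue_cut_bound sides21 out _; lia.
Qed.

Section LargeRedComponent.
Variables (v : T) (K : {set T}).
Hypotheses (ltK : #|K| < m)
  (Kcov : forall x y, red x y -> connect red v x -> (x \in K) || (y \in K)).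

Local Notation C := (component red v).
Local Notation uncovered A := ((A :&: C) :\: K).

Lemma blue_off_red_cover x y : x \in C -> x \notin K -> y \notin K -> e x y -> blue x y.
Proof.
rewrite inE => vx xK yK /red_or_blue/orP[rxy|//].
by have := Kcov rxy vx; rewrite (negbTE xK) (negbTE yK).
Qed.

Lemma red_cover_meet_lt A B : sides A B -> #|B :\: C| < n -> 2 * #|K :&: A| < N.
Proof.
move=> sAB outB; rewrite ltnNge; apply/negP=> bigK.
have [[dAB _] cA cB] := sAB.
have edges : {in A :\: K & uncovered B, forall x y, e x y -> blue x y}.
  move=> x y /setDP[_ xK] /setDP[/setIP[_ yC] yK] exy.
  by rewrite blue_sub_sym; apply: blue_off_red_cover; rewrite // esym.
have sDB : uncovered B \subset B := subset_trans (subsetDl _ K) (subsetIl B C).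
have := coverable_block_bound esym deg_gt sAB blue_sub_sym blue_cov n_gt0
          (subsetDl A K) sDB edges.
have := leq_card_setDI K (subsetIl B C); have := cardsID C B; have := cardsI_disjoint K dAB.
rewrite (cardsD A K) (setIC A K) cA cB; lia.
Qed.

Lemma uncovered_blue_connected A B : sides A B -> #|A :\: C| < n ->
  {in uncovered A &, forall x x', connect blue x x'}.
Proof.
move=> sAB outA x x' /setDP[/setIP[xA xC] xK] /setDP[/setIP[x'A x'C] x'K].
have ltKB := red_cover_meet_lt (sides_sym sAB) outA.
have [_ _ cB] := sAB.
have leBK : N <= 2 * #|B :\: K| by rewrite cardsD (setIC B K) cB; lia.
have [y /setDP[_ yK] /andP[exy ex'y]] := common_neighbour deg_gt sAB xA x'A (subsetDl B K) leBK.
apply: connect_trans (connect1 (blue_off_red_cover xC xK yK exy)) _.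
by rewrite (sym_connect_sym blue_sub_sym) connect1 // blue_off_red_cover.
Qed.

Lemma uncovered_in_blue_cover A B r (L : {set T}) :
  sides A B -> #|A :\: C| < n -> #|L| < n ->
  (forall x y, blue x y -> connect blue r x -> (x \in L) || (y \in L)) ->
  {in uncovered A, forall x, connect blue r x} -> uncovered A \subset L.
Proof.
move=> sAB outA ltL Lcov rD; apply/subsetP=> x xD; apply/negPn/negP=> xL.
have /setDP[/setIP[xA xC] xK] := xD.
have [[dAB _] cA cB] := sAB.
have vx : connect red v x by rewrite inE in xC.
have nx : [set z | e x z] \subset (K :&: B) :|: (L :&: B).
  apply/subsetP=> z zx; rewrite !inE (subsetP (nb_subset_side sAB xA) _ zx) !andbT.
  rewrite inE in zx; case/orP: (red_or_blue zx) => [rxz|bxz].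
    by have := Kcov rxz vx; rewrite (negbTE xK) /= => ->.
  by have := Lcov _ _ bxz (rD _ xD); rewrite (negbTE xL) /= => ->; rewrite orbT.
have /subsetPn[y yB] : ~~ (B \subset K :|: L).
  apply: card_lt_subsetN; apply: leq_ltn_trans (leq_card_setU K L).1 _.
  by rewrite cB; move: ltK ltL; clear; lia.
rewrite !inE negb_or => /andP[yK yL].
have ny : [set z | e y z] \subset ((K :&: A) :|: (L :&: A)) :|: (A :\: C).
  apply/subsetP=> z zy; have zA := subsetP (nb_subset_side (sides_sym sAB) yB) _ zy.
  rewrite !in_setU !in_setI !in_setD zA !andbT.
  case: (boolP (z \in K)) => //= zK; case: (boolP (z \in C)) => zC; rewrite ?orbT //=.
  rewrite inE esym in zy.
  have zD : z \in uncovered A by rewrite !inE zK zA /=; rewrite inE in zC.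
  have := Lcov _ _ (blue_off_red_cover zC zK yK zy) (rD _ zD).
  by rewrite (negbTE yL) orbF.
have := deg_sum_gt deg_gt x y; rewrite /deg.
have := leq_card_subU nx; have := leq_card_subU ny.
have := (leq_card_setU (K :&: A) (L :&: A)).1.
have := cardsI_disjoint K dAB; have := cardsI_disjoint L dAB.
move: ltK ltL outA ltnm; clear; lia.
Qed.

Lemma uncovered_sides_blue_connected a b : #|V1 :\: C| < n -> #|V2 :\: C| < n ->
  a \in uncovered V1 -> b \in uncovered V2 -> connect blue a b.
Proof.
move=> out1 out2 aD bD; apply/negPn/negP=> nab.
have noedge x y : x \in uncovered V1 -> y \in uncovered V2 -> ~~ e x y.
  move=> xD yD; apply/negP=> exy; case/negP: nab.
  have /setDP[/setIP[_ xC] xK] := xD; have /setDP[_ yK] := yD.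
  apply: connect_trans (uncovered_blue_connected sides12 out1 aD xD) _.
  apply: connect_trans (connect1 (blue_off_red_cover xC xK yK exy)) _.
  by rewrite (sym_connect_sym blue_sub_sym) (uncovered_blue_connected sides21 out2 bD yD).
have nb_sub A B d :
    sides A B -> d \in uncovered A -> {in uncovered B, forall z, ~~ e d z} ->
    [set z | e d z] \subset (K :&: B) :|: (B :\: C).
  move=> sAB /setDP[/setIP[dA _] _] dz; apply/subsetP=> z zd.
  have zB := subsetP (nb_subset_side sAB dA) _ zd; rewrite !in_setU !in_setI !in_setD zB !andbT.
  case: (boolP (z \in K)) => //= zK; apply/negP=> zC.
  have zD : z \in uncovered B by rewrite in_setD in_setI zK zB zC.
  by rewrite inE in zd; move/negP: (dz z zD).
have noedge_b : {in uncovered V1, forall z, ~~ e b z}.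
  by move=> z zD; rewrite esym; apply: noedge.
have := leq_card_subU (nb_sub _ _ _ sides12 aD (fun z => noedge _ _ aD)).
have := leq_card_subU (nb_sub _ _ _ sides21 bD noedge_b).
have [dV _] := bip; have := cardsI_disjoint K dV; have := deg_sum_gt deg_gt a b.
rewrite /deg; lia.
Qed.

Lemma large_red_comp_contra : #|V1 :\: C| < n -> #|V2 :\: C| < n -> False.
Proof.
move=> out1 out2.
have K1 := red_cover_meet_lt sides12 out2; have K2 := red_cover_meet_lt sides21 out1.
have [dV _] := bip.
have := leq_card_setDI K (subsetIl V1 C); have := leq_card_setDI K (subsetIl V2 C).
have := cardsID C V1; have := cardsID C V2; have := cardsI_disjoint K dV.
move=> cK c2 c1 D2 D1.
have [a aD] : exists a, a \in uncovered V1 by apply/card_gt0P; lia.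
have [b bD] : exists b, b \in uncovered V2 by apply/card_gt0P; lia.
have [L ltL Lcov] := blue_cov a.
have sub1 := uncovered_in_blue_cover sides12 out1 ltL Lcov
  (fun x xD => uncovered_blue_connected sides12 out1 aD xD).
have ab := uncovered_sides_blue_connected out1 out2 aD bD.
have sub2 := uncovered_in_blue_cover sides21 out2 ltL Lcov
  (fun y yD => connect_trans ab (uncovered_blue_connected sides21 out2 bD yD)).
have inL A : uncovered A \subset L -> #|uncovered A| <= #|L :&: A|.
  move=> sub; apply/subset_leq_card.
  by rewrite subsetI sub (subset_trans (subsetDl _ K) (subsetIl A C)).
have := inL _ sub1; have := inL _ sub2; have := cardsI_disjoint L dV; lia.
Qed.

End LargeRedComponent.

Section SmallRedComponents.
Hypothesis red_comp_lt : forall v,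
  #|V1 :&: component red v| < n /\ #|V2 :&: component red v| < n.

Lemma red_deg_lt x : #|[set y | red x y]| < n.
Proof.
have red_nb A B : sides A B -> x \in A -> [set y | red x y] \subset B :&: component red x.
  move=> sAB xA; apply/subsetP=> y; rewrite !inE => rxy.
  have yB := subsetP (nb_subset_side sAB xA) y; rewrite inE in yB.
  by rewrite yB ?(red_subW rxy) // connect1.
case/orP: (bipartite_parts_mem x bip) => xV.
  exact: leq_ltn_trans (subset_leq_card (red_nb _ _ sides12 xV)) (red_comp_lt x).2.
exact: leq_ltn_trans (subset_leq_card (red_nb _ _ sides21 xV)) (red_comp_lt x).1.
Qed.

Lemma red_connected_blue_connected x x' : x \in V1 -> x' \in V1 ->
  connect red x x' -> connect blue x x'.
Proof.
move=> xV x'V rxx'; apply/negPn/negP=> nb.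
have common : [set z | e x z] :&: [set z | e x' z] \subset V2 :&: component red x.
  apply/subsetP=> z; rewrite !inE => /andP[exz ex'z].
  have zV := subsetP (nb_subset_side sides12 xV) z; rewrite inE in zV; rewrite zV //=.
  case/orP: (red_or_blue exz) => [rxz|bxz]; first exact: connect1.
  case/orP: (red_or_blue ex'z) => [rx'z|bx'z].
    exact: connect_trans rxx' (connect1 rx'z).
  case/negP: nb; apply: connect_trans (connect1 bxz) (connect1 _).
  by rewrite blue_sub_sym.
have := subset_leq_card common; have := (red_comp_lt x).2.
have := cardsUI_sub (nb_subset_side sides12 xV) (nb_subset_side sides12 x'V).
have := deg_gt x; have := deg_gt x'; rewrite /deg cardV2; lia.
Qed.

Lemma same_colour_blue_connected a b w : a \in V1 -> b \in V1 ->
  e a w -> e b w -> c a w = c b w -> connect blue a b.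
Proof.
move=> aV bV eaw ebw cab; case caw : (c a w).
  apply: red_connected_blue_connected => //.
  apply: connect_trans (connect1 (_ : red a w)) (connect1 (_ : red w b)).
    by rewrite /red_sub eaw caw.
  by rewrite /red_sub esym ebw csym -cab caw.
apply: connect_trans (connect1 (_ : blue a w)) (connect1 (_ : blue w b)).
  by rewrite /blue_sub eaw caw.
by rewrite /blue_sub esym ebw csym -cab caw.
Qed.

Lemma blue_connected_of_three x y z : x \in V1 -> y \in V1 -> z \in V1 ->
  [|| connect blue x y, connect blue x z | connect blue y z].
Proof.
move=> xV yV zV.
have leNz : N <= 2 * #|[set w | e z w]| by have := deg_gt z; rewrite /deg; lia.
have [w] := common_neighbour deg_gt sides12 xV yV (nb_subset_side sides12 zV) leNz.
rewrite inE => ezw /andP[exw eyw].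
case cx : (c x w); case cy : (c y w); case cz : (c z w).
all: first [ by rewrite (same_colour_blue_connected xV yV exw eyw) ?cx ?cy
           | by rewrite (same_colour_blue_connected xV zV exw ezw) ?cx ?cz ?orbT
           | by rewrite (same_colour_blue_connected yV zV eyw ezw) ?cy ?cz ?orbT ].
Qed.

(* A blue component meeting both sides outside its cover [L] would give two vertices
   whose edges are red (fewer than [n] each) or go into [L]. *)
Lemma blue_comp_one_side u (L : {set T}) : #|L| < n ->
  (forall x y, blue x y -> connect blue u x -> (x \in L) || (y \in L)) ->
  (V1 :&: component blue u \subset L) || (V2 :&: component blue u \subset L).
Proof.
move=> ltL Lcov.
case: (boolP (V1 :&: component blue u \subset L)) => //= /subsetPn[x].
rewrite !inE => /andP[xV ux] xL; apply/subsetP=> y; rewrite !inE => /andP[yV uy].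
apply/negPn/negP=> yL.
have nb A B d : sides A B -> d \in A -> d \notin L -> connect blue u d ->
    [set z | e d z] \subset [set z | red d z] :|: (L :&: B).
  move=> sAB dA dL ud; apply/subsetP=> z zd; have zB := subsetP (nb_subset_side sAB dA) _ zd.
  rewrite !inE zB andbT; rewrite inE in zd; case/orP: (red_or_blue zd) => [->//|bdz].
  by have := Lcov _ _ bdz ud; rewrite (negbTE dL) => /= ->; rewrite orbT.
have := leq_card_subU (nb _ _ _ sides12 xV xL ux).
have := leq_card_subU (nb _ _ _ sides21 yV yL uy).
have := red_deg_lt x; have := red_deg_lt y; have [dV _] := bip.
have := cardsI_disjoint L dV; have := deg_sum_gt deg_gt x y; rewrite /deg; lia.
Qed.

Lemma blue_comps_apart u w : ~~ connect blue u w ->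
  m <= #|V1 :&: component blue w| -> m <= #|V2 :&: component blue u| -> False.
Proof.
move=> nuw leW leU.
have edges : {in V1 :&: component blue w & V2 :&: component blue u,
              forall x y, e x y -> red x y}.
  move=> x y; rewrite !inE => /andP[_ wx] /andP[_ uy] /red_or_blue/orP[//|bxy].
  case/negP: nuw; apply: connect_trans uy _; rewrite (sym_connect_sym blue_sub_sym).
  exact: connect_trans wx (connect1 bxy).
have := coverable_block_bound esym deg_gt sides12 red_sub_sym red_cov (ltn_trans n_gt0 ltnm)
          (subsetIl _ _) (subsetIl _ _) edges leW leU.
lia.
Qed.

Lemma blue_nb_in_V1 y : y \in V2 -> exists2 z, z \in V1 & blue z y.
Proof.
move=> yV; have /subsetPn[z] : ~~ ([set z | e y z] \subset [set z | red y z]).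
  by apply: card_lt_subsetN; have := red_deg_lt y; have := deg_gt y; rewrite /deg; lia.
rewrite !inE => eyz nr; exists z.
  by have := subsetP (nb_subset_side sides21 yV) z; rewrite inE; apply.
by rewrite blue_sub_sym; case/orP: (red_or_blue eyz) => //; rewrite (negbTE nr).
Qed.

Lemma V1_blue_connected_contra v0 : {in V1, forall x, connect blue v0 x} -> False.
Proof.
move=> v0V; have [L ltL Lcov] := blue_cov v0.
have edges : {in V1 :\: L & V2 :\: L, forall x y, e x y -> red x y}.
  move=> x y /setDP[xV xL] /setDP[_ yL] /red_or_blue/orP[//|bxy].
  by have := Lcov _ _ bxy (v0V _ xV); rewrite (negbTE xL) (negbTE yL).
have [dV _] := bip; have := cardsI_disjoint L dV.
have := coverable_block_bound esym deg_gt sides12 red_sub_sym red_cov (ltn_trans n_gt0 ltnm)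
          (subsetDl V1 L) (subsetDl V2 L) edges.
rewrite !cardsD cardV1 cardV2 (setIC V1 L) (setIC V2 L); lia.
Qed.

Lemma small_red_comps_contra : False.
Proof.
have [v0 v0V] : exists v0, v0 \in V1 by apply/card_gt0P; lia.
case: (boolP [forall x in V1, connect blue v0 x]) => [/forall_inP|].
  exact: V1_blue_connected_contra.
rewrite negb_forall_in => /exists_inP[v1 v1V n01].
have in01 x : x \in V1 -> connect blue v0 x || connect blue v1 x.
  by move=> xV; have := blue_connected_of_three v0V v1V xV; rewrite (negbTE n01).
have cover (A : {set T}) : A \subset V1 :|: V2 ->
    #|A| <= #|A :&: component blue v0| + #|A :&: component blue v1|.
  move=> sA; apply: leq_card_subU; apply/subsetP=> x xA; rewrite !inE xA /=.
  have := subsetP sA _ xA; rewrite inE => /orP[/in01 //|/blue_nb_in_V1[z zV bzx]].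
  by case/orP: (in01 _ zV) => r; rewrite (connect_trans r (connect1 bzx)) ?orbT.
have := cover _ (subsetUl V1 V2); have := cover _ (subsetUr V1 V2).
rewrite cardV1 cardV2 => cov2 cov1.
have n10 : ~~ connect blue v1 v0 by rewrite (sym_connect_sym blue_sub_sym).
have [L0 ltL0 L0cov] := blue_cov v0; have [L1 ltL1 L1cov] := blue_cov v1.
case/orP: (blue_comp_one_side ltL0 L0cov) => /subset_leq_card s0;
case/orP: (blue_comp_one_side ltL1 L1cov) => /subset_leq_card s1.
- lia.
- by apply: (blue_comps_apart n01); lia.
- by apply: (blue_comps_apart n10); lia.
- lia.
Qed.

End SmallRedComponents.

Lemma coverable_red_blue_contra : False.
Proof.
case: (boolP [exists v,
          (#|V1 :\: component red v| < n) && (#|V2 :\: component red v| < n)]).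
  case/existsP=> v /andP[out1 out2]; have [K ltK Kcov] := red_cov v.
  exact: large_red_comp_contra ltK Kcov out1 out2.
rewrite negb_exists => /forallP large; apply: small_red_comps_contra => v.
by case: (red_comp_dichotomy v) => // -[out1 out2]; move: (large v); rewrite out1 out2.
Qed.

End Covers.
End TwoColouredMatchings.

Theorem theorem1p5 (m n : nat) (T : finType) (e : rel T) (V1 V2 : {set T})
  (c : T -> T -> bool) :
  0 < n -> n < m ->
  simple_graph e ->
  bipartite_parts e V1 V2 ->
  #|V1| = m + n - 1 -> #|V2| = m + n - 1 ->
  (forall x : T, 3 * (m + n - 1) < 4 * deg e x) ->
  (forall x y, c x y = c y x) ->
  connected_matching (red_sub e c) m \/ connected_matching (blue_sub e c) n.
Proof.
move=> n_gt0 ltnm [esym _] bip cardV1 cardV2 deg_gt csym.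
have [red_m|no_red] := classic (connected_matching (red_sub e c) m); first by left.
have [blue_n|no_blue] := classic (connected_matching (blue_sub e c) n); first by right.
exfalso; apply: (coverable_red_blue_contra n_gt0 ltnm esym bip cardV1 cardV2 deg_gt csym).
  apply: coverable_of_no_connected_matching (red_sub_sym esym csym) _ no_red.
  exact: bipartite_parts_subrel (@red_subW _ _ c) bip.
apply: coverable_of_no_connected_matching (blue_sub_sym esym csym) _ no_blue.
exact: bipartite_parts_subrel (@blue_subW _ _ c) bip.
Qed.
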